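(* Let $p$ be a prime, $g$ a generator of $U(\mathbb Z/p\mathbb Z)$, $n\ge 1$ an integer, $\varphi=\cos\frac{2\pi}{p-1}+i\sin\frac{2\pi}{p-1}$ and $\omega=\cos\frac{2\pi}{n}+i\sin\frac{2\pi}{n}$. For $1\le k\le n$ let $\beta_{1k}\in\mathbb R$ and $\beta_{2k}\ge 0$, with $\beta_{11}\ge\beta_{21}\ge 0$, and let $\mathcal B_k=\{\beta_{1k},\beta_{2k},\beta_{2k}\varphi,\dots,\beta_{2k}\varphi^{p-2}\}$ (with multiplicities), and $\mathcal B=\bigcup_{k=1}^n\mathcal B_k$. Let $S_1,\dots,S_n$ be real $g$-circulant matrices of order $p$ with spectrum $\Sigma(S_k)=\mathcal B_k$ for each $k$. Suppose that $\mathcal B_{n+2-k}=\overline{\mathcal B_k}$ for $2\le k\le n$, and that $$L_k=\frac1n\sum_{\ell=1}^n S_\ell\,\omega^{-(k-1)(\ell-1)}\ \ge 0\quad\text{(entrywise) for all }1\le k\le n.$$ Then $\mathcal B$ is the spectrum of a nonnegative $g$-circulant matrix by blocks (of order $pn$, with $p\times p$ blocks of order $n$).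
   Context: A $g$-circulant matrix of order $p$ is a matrix whose $(i,j)$ entry is $a_{j-(i-1)g}$ for its first row $(a_1,\dots,a_p)$ (subscripts modulo $p$). A block matrix $A=(A_{ij})_{1\le i,j\le p}$ with each block of size $n\times n$ is a $g$-circulant matrix by blocks if $A_{ij}=A_{i+1,j+g}$ for all $1\le i,j\le p$, subscripts taken modulo $p$; equivalently $A=g\text{-}circ(A_1,\dots,A_p)$ with block $(i,j)$ equal to $A_{j-(i-1)g}$. *)

From mathcomp Require Import all_boot all_algebra all_reals all_analysis.
From mathcomp Require Export complex.
Set Implicit Arguments. Unset Strict Implicit. Unset Printing Implicit Defensive.
Import GRing.Theory Num.Theory.
Local Open Scope ring_scope.
Local Open Scope complex_scope.

Definition is_generator_mod (p g : nat) : Prop :=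
  forall x : nat, (0 < x < p)%N -> exists k : nat, x = g ^ k %[mod p].

(* A (p x p) matrix is g-circulant: A_{ij} = A_{i+1, j+g} (indices mod p),
   equivalently A_{ij} = a_{j-(i-1)g} with (a_1,...,a_p) its first row. *)
Definition is_gcirc (R : Type) (p g : nat) (A : 'M[R]_p) : Prop :=
  forall i j i' j' : 'I_p,
    (i' = ((i + 1) %% p)%N :> nat) -> (j' = ((j + g) %% p)%N :> nat) -> A i j = A i' j'.

(* A (p*n x p*n) matrix, viewed as a p x p block matrix with n x n blocks
   (block (i,j), entry (a,b) is A (i*n+a) (j*n+b) = A (mxvec_index i a) (mxvec_index j b)),
   is g-circulant by blocks: A_{ij} = A_{i+1, j+g} (block indices mod p). *)
Definition is_gcirc_blocks (R : Type) (p n g : nat) (A : 'M[R]_(p * n)) : Prop :=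
  forall (i j i' j' : 'I_p) (a b : 'I_n),
    (i' = ((i + 1) %% p)%N :> nat) -> (j' = ((j + g) %% p)%N :> nat) ->
    A (mxvec_index i a) (mxvec_index j b) = A (mxvec_index i' a) (mxvec_index j' b).

Definition spectrum_is (R : realType) (m : nat) (A : 'M[R]_m) (s : seq R[i]) : Prop :=
  char_poly (map_mx (fun x : R => x%:C) A) = \prod_(z <- s) ('X - z%:P).

Definition cis (R : realType) (t : R) : R[i] := (cos t) +i* (sin t).

Definition Bset (R : realType) (p : nat) (phi : R[i]) (b1 b2 : R) : seq R[i] :=
  b1%:C :: [seq b2%:C * phi ^+ j | j <- iota 0 p.-1].

Arguments is_gcirc {R} p g A.
Arguments is_gcirc_blocks {R} p n g A.

(* Index the rows and columns of a pn x pn matrix by pairs (i, a) in I_p x I_n and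
   put L_k = 1/n sum_l S_l omega^(-kl).  The matrix A whose entry at ((i, a), (j, b))
   is L_(b - a mod n)(i, j) is nonnegative by hypothesis, and g-circulant by blocks
   because every L_k inherits the g-circulant pattern of the S_l.  With the roles of
   i and a exchanged, A is block circulant with blocks L_0, ..., L_(n-1); conjugating
   it by 1_p (x) (omega^(ab))_(a,b) yields the block diagonal matrix of the S_m, since
   S_m = sum_k omega^(km) L_k.  Hence the characteristic polynomial of A is the
   product of those of the S_k, whose roots are listed by B. *)

From mathcomp Require Import all_boot all_algebra all_reals all_analysis.
From mathcomp Require Import order fingroup perm mxtens ring lra.
Set Implicit Arguments.
Unset Strict Implicit.
Unset Printing Implicit Defensive.
Import Order.TTheory GRing.Theory Num.Theory.
Local Open Scope ring_scope.

Lemma cisD (R : realType) (a b : R) : cis a * cis b = cis (a + b).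
Proof. by rewrite /cis cosD sinD [sin _ * cos _ + _]addrC. Qed.

Lemma cisX (R : realType) (t : R) k : cis t ^+ k = cis (k%:R * t).
Proof.
elim: k => [|k IHk]; first by rewrite mul0r /cis cos0 sin0.
by rewrite exprSr IHk cisD -{2}[t]mul1r -mulrDl -natr1.
Qed.

Lemma cos_neq1 (R : realType) (x : R) : 0 < x < pi *+ 2 -> cos x != 1.
Proof.
move=> /andP[x_gt0 x_lt2pi]; apply/eqP => cosx1.
have sin_half_gt0 : 0 < sin (x / 2).
  by apply: sin_gt0_pi; rewrite divr_gt0 //= ltr_pdivrMr // mulr_natr.
have : sin (x / 2) ^+ 2 = 0.
  rewrite sin2cos2; move: cosx1.
  by rewrite -[x in cos x](@divfK _ 2) ?pnatr_eq0 // mulr_natr cos_mulr2n; lra.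
by move/eqP; rewrite expf_eq0 /= gt_eqF.
Qed.

Lemma cis_prim_root (R : realType) n :
  (0 < n)%N -> n.-primitive_root (cis ((2 * pi) / n%:R) : R[i]).
Proof.
move=> n_gt0; have n_neq0 : n%:R != 0 :> R by rewrite pnatr_eq0 -lt0n.
apply/andP; split => //; apply/forallP => k; rewrite unity_rootE cisX mulrCA.
have [->|k1_neq_n] := eqVneq k.+1 n.
  by rewrite divff // mulr1 mulr_natl /cis cos2pi sin2pi eqxx.
rewrite eqbF_neg; apply/eqP => -[cos1 _]; move: cos1; apply/eqP/cos_neq1.
have ratio_gt0 : 0 < k.+1%:R / n%:R :> R by rewrite divr_gt0 ?ltr0n.
have ratio_lt1 : k.+1%:R / n%:R < 1 :> R.
  by rewrite ltr_pdivrMr ?ltr0n // mul1r ltr_nat ltn_neqAle k1_neq_n ltn_ord.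
have := pi_gt0 R; rewrite -mulr_natr; nra.
Qed.

Section DiscreteFourier.
Variables (K : fieldType) (n : nat) (w : K).
Hypothesis w_prim : n.-primitive_root w.

Let w_neq0 : w != 0.
Proof. by rewrite (prim_root_eq0 w_prim) -lt0n (prim_order_gt0 w_prim). Qed.

Lemma sum_prim_root_orth (m l : 'I_n) :
  \sum_(b < n) w ^+ (b * m) / w ^+ (b * l) = if m == l then n%:R else 0.
Proof.
have [<-|m_neq_l] := eqVneq m l.
  under eq_bigr do rewrite divff ?expf_neq0 //.
  by rewrite sumr_const card_ord.
set z := w ^+ m / w ^+ l.
have zE b : w ^+ (b * m) / w ^+ (b * l) = z ^+ b.
  by rewrite exprMn exprVn -!exprM mulnC [(l * b)%N]mulnC.
under eq_bigr do rewrite zE.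
have z_neq1 : z != 1.
  rewrite /z; apply: contra m_neq_l => /eqP z1.
  have : w ^+ m == w ^+ l by rewrite -[w ^+ m](divfK (expf_neq0 l w_neq0)) z1 mul1r.
  by rewrite (eq_prim_root_expr w_prim) !modn_small.
have zn : z ^+ n = 1.
  rewrite /z exprMn exprVn -!exprM mulnC [(l * n)%N]mulnC !exprM.
  by rewrite (prim_expr_order w_prim) !expr1n invr1 mulr1.
have /esym/eqP := subrX1 z n; rewrite zn subrr mulf_eq0 subr_eq0 (negbTE z_neq1) /=.
by move/eqP.
Qed.

Definition idft (f : 'I_n -> K) (k : nat) : K :=
  n%:R^-1 * \sum_(l < n) f l * w ^- (k * l).

Lemma idft_mod f k : idft f (k %% n) = idft f k.
Proof.
rewrite /idft; congr (_ * _); apply: eq_bigr => l _.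
by rewrite -[w ^+ (k %% n * l)](prim_expr_mod w_prim) modnMml (prim_expr_mod w_prim).
Qed.

Lemma sum_idft_shift f (a m : 'I_n) :
  \sum_(b < n) idft f (b + (n - a))%N * w ^+ (b * m) = w ^+ (a * m) * f m.
Proof.
have n_neq0 := prim_root_natf_neq0 w_prim.
have shiftE (b l : nat) : w ^- ((b + (n - a))%N * l) = w ^+ (a * l) / w ^+ (b * l).
  apply: (@mulIf _ (w ^+ ((b + (n - a))%N * l))); first by rewrite expf_neq0.
  rewrite mulVf ?expf_neq0 // mulrAC -exprD -mulnDl addnCA subnKC 1?ltnW //.
  rewrite mulnDl exprD [w ^+ (n * l)]exprM (prim_expr_order w_prim) expr1n mulr1.
  by rewrite divff ?expf_neq0.
transitivity (\sum_(l < n) f l * w ^+ (a * l) *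
                (n%:R^-1 * \sum_(b < n) w ^+ (b * m) / w ^+ (b * l))).
  rewrite /idft; under eq_bigr do rewrite mulr_sumr.
  under eq_bigr do rewrite mulr_suml.
  rewrite exchange_big /=; apply: eq_bigr => l _; rewrite !mulr_sumr.
  by apply: eq_bigr => b _; rewrite shiftE; ring.
under eq_bigr do rewrite sum_prim_root_orth.
rewrite (bigD1 m) //= eqxx mulVf // mulr1 big1 ?addr0 1?mulrC // => l /negbTE.
by rewrite eq_sym => ->; rewrite !mulr0.
Qed.

Definition dft_mx : 'M[K]_n := \matrix_(a, b) w ^+ (a * b).

Definition dft_inv_mx : 'M[K]_n := \matrix_(a, b) (n%:R^-1 / w ^+ (a * b)).

Lemma dft_mxK : dft_mx *m dft_inv_mx = 1%:M.
Proof.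
apply/matrixP => a b; rewrite !mxE.
under eq_bigr do rewrite !mxE mulrCA [(a * _)%N]mulnC.
rewrite -mulr_sumr sum_prim_root_orth.
by case: eqP; rewrite ?mulr0 ?mulVf ?(prim_root_natf_neq0 w_prim).
Qed.

End DiscreteFourier.

Section PairIndex.
Variables m n : nat.

Definition mxvec_pair (x : 'I_(m * n)) : 'I_m * 'I_n :=
  enum_val (cast_ord (esym (mxvec_cast m n)) x).

Lemma mxvec_pairK i j : mxvec_pair (mxvec_index i j) = (i, j).
Proof. by rewrite /mxvec_pair cast_ordK enum_rankK. Qed.

Lemma eq_mxvec_index i j i' j' :
  (mxvec_index i j == mxvec_index i' j' :> 'I_(m * n)) = (i == i') && (j == j').
Proof.
apply/eqP/andP => [/(congr1 mxvec_pair)|[/eqP-> /eqP->]//].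
by rewrite !mxvec_pairK => -[-> ->].
Qed.

Lemma big_mxvec_index (V : nmodType) (F : 'I_(m * n) -> V) :
  \sum_x F x = \sum_i \sum_j F (mxvec_index i j).
Proof.
rewrite pair_big (reindex (uncurry (@mxvec_index m n))) /=; last exact: curry_mxvec_bij.
by apply: eq_bigr => -[].
Qed.

Definition pairmx {R : Type} (F : 'I_m -> 'I_n -> 'I_m -> 'I_n -> R) : 'M[R]_(m * n) :=
  \matrix_(x, y) F (mxvec_pair x).1 (mxvec_pair x).2 (mxvec_pair y).1 (mxvec_pair y).2.

Lemma pairmxE {R : Type} F i j i' j' :
  @pairmx R F (mxvec_index i j) (mxvec_index i' j') = F i j i' j'.
Proof. by rewrite mxE !mxvec_pairK. Qed.

Lemma pairmxP {R : Type} (A : 'M[R]_(m * n)) F :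
  (forall i j i' j', A (mxvec_index i j) (mxvec_index i' j') = F i j i' j') ->
  A = pairmx F.
Proof.
move=> AE; apply/matrixP => x y.
by case/mxvec_indexP: x => i j; case/mxvec_indexP: y => i' j'; rewrite pairmxE AE.
Qed.

Lemma mul_pairmx {R : pzSemiRingType} (F G : 'I_m -> 'I_n -> 'I_m -> 'I_n -> R) :
  pairmx F *m pairmx G =
  pairmx (fun i j i' j' => \sum_k \sum_l F i j k l * G k l i' j').
Proof.
apply: pairmxP => i j i' j'; rewrite mxE big_mxvec_index.
by apply: eq_bigr => k _; apply: eq_bigr => l _; rewrite !pairmxE.
Qed.


Definition kron1mx {R : pzSemiRingType} (V : 'M[R]_n) : 'M[R]_(m * n) :=
  pairmx (fun i a j b => (i == j)%:R * V a b).

Lemma mul_pairmx_kron1mx {R : pzSemiRingType} F (V : 'M[R]_n) :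
  pairmx F *m kron1mx V = pairmx (fun i a j b => \sum_c F i a j c * V c b).
Proof.
rewrite mul_pairmx; apply: pairmxP => i a j b; rewrite pairmxE.
rewrite (bigD1 j) //= [X in _ + X]big1 ?addr0; last first.
  by move=> k /negbTE kj; apply: big1 => c _; rewrite kj mul0r mulr0.
by apply: eq_bigr => c _; rewrite eqxx mul1r.
Qed.

Lemma mul_kron1mx_pairmx {R : pzSemiRingType} (V : 'M[R]_n) F :
  kron1mx V *m pairmx F = pairmx (fun i a j b => \sum_c V a c * F i c j b).
Proof.
rewrite mul_pairmx; apply: pairmxP => i a j b; rewrite pairmxE.
rewrite (bigD1 i) //= [X in _ + X]big1 ?addr0; last first.
  by move=> k /negbTE ki; apply: big1 => c _; rewrite eq_sym ki mul0r mul0r.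
by apply: eq_bigr => c _; rewrite eqxx mul1r.
Qed.

Lemma mul_kron1mx {R : comPzSemiRingType} (V V' : 'M[R]_n) :
  kron1mx V *m kron1mx V' = kron1mx (V *m V').
Proof.
rewrite [X in _ *m X]/kron1mx mul_kron1mx_pairmx; apply/esym/pairmxP => i a j b.
by rewrite pairmxE mxE mulr_sumr; apply: eq_bigr => c _; rewrite mulrCA.
Qed.

Lemma kron1mx1 {R : pzSemiRingType} : kron1mx (1%:M : 'M[R]_n) = 1%:M.
Proof.
by apply/esym/pairmxP => i a j b; rewrite !mxE eq_mxvec_index -mulnb natrM.
Qed.

End PairIndex.

Section BlockDiagonal.
Variable K : comNzRingType.

Definition diag_block n p (A : 'M[K]_(n * p)) (a : 'I_n) : 'M[K]_p :=
  \matrix_(i, j) A (mxtens_index (a, i)) (mxtens_index (a, j)).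

Lemma det_block_diag n p (A : 'M[K]_(n * p)) :
  (forall a b i j, a != b -> A (mxtens_index (a, i)) (mxtens_index (b, j)) = 0) ->
  \det A = \prod_a \det (diag_block A a).
Proof.
elim: n A => [|n IHn] A A_diag; first by rewrite big_ord0 det_mx00.
have lshiftE (i : 'I_p) : lshift (n * p) i = mxtens_index (ord0, i) by apply: val_inj.
have rshiftE a (i : 'I_p) :
    rshift p (mxtens_index (a, i)) = mxtens_index (lift ord0 a, i).
  by apply: val_inj; rewrite /= addnA.
have ur0 : ursubmx (A : 'M[K]_(p + n * p)) = 0.
  apply/matrixP => i y; case: (mxtens_indexP y) => b j.
  by rewrite !mxE lshiftE rshiftE A_diag // eq_sym neq_lift.
have -> : \det A =
    \det (block_mx (ulsubmx (A : 'M[K]_(p + n * p))) 0 (dlsubmx A) (drsubmx A)).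
  by rewrite -ur0 submxK.
rewrite det_lblock IHn => [|a b i j ab]; last by rewrite !mxE !rshiftE A_diag // inj_eq.
rewrite big_ord_recl; congr (\det _ * _).
  by apply/matrixP => i j; rewrite !mxE !lshiftE.
by apply: eq_bigr => a _; congr (\det _); apply/matrixP => i j; rewrite !mxE !rshiftE.
Qed.

End BlockDiagonal.

Lemma det_reindex (K : comNzRingType) m m' (s : 'I_m -> 'I_m') (A : 'M[K]_m') :
  bijective s -> \det (\matrix_(x, y) A (s x) (s y)) = \det A.
Proof.
move=> s_bij; have m_eq : m = m' by have := bij_eq_card s_bij; rewrite !card_ord.
case: m' / m_eq in s A s_bij *; pose sp := perm (bij_inj s_bij).
have -> : \matrix_(x, y) A (s x) (s y) = row_perm sp (col_perm sp A).
  by apply/matrixP => x y; rewrite !mxE !permE.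
rewrite row_permE col_permE !det_mulmx !det_perm odd_permV.
by rewrite mulrCA -signr_addb addbb mulr1.
Qed.

Lemma det_pairmx_diag (K : comNzRingType) p n (M : 'I_n -> 'M[K]_p) :
  \det (pairmx (fun i a j b => if a == b then M a i j else 0)) = \prod_a \det (M a).
Proof.
(* In [pairmx] order the block index is the minor one; moving it to the front,
   in [mxtens_index] order, makes the matrix block diagonal. *)
set D := pairmx _.
pose s (x : 'I_(p * n)) := mxtens_index ((mxvec_pair x).2, (mxvec_pair x).1).
pose g (y : 'I_(n * p)) := mxvec_index (mxtens_unindex y).2 (mxtens_unindex y).1.
have gE a i : g (mxtens_index (a, i)) = mxvec_index i a by rewrite /g mxtens_indexK.
have sK : cancel s g.
  by move=> x; case/mxvec_indexP: x => i a; rewrite /s mxvec_pairK gE.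
have gK : cancel g s.
  by move=> y; case: (mxtens_indexP y) => a i; rewrite gE /s mxvec_pairK.
have -> : D = \matrix_(x, y) (\matrix_(x', y') D (g x') (g y')) (s x) (s y).
  by apply/matrixP => x y; rewrite !mxE !sK.
rewrite det_reindex; last by exists g.
rewrite det_block_diag => [|a b i j ab]; last by rewrite !mxE !gE !mxvec_pairK ifN.
apply: eq_bigr => a _; congr (\det _); apply/matrixP => i j.
by rewrite !mxE !gE !mxvec_pairK eqxx.
Qed.

Lemma char_poly_pairmx_diag (K : comNzRingType) p n (M : 'I_n -> 'M[K]_p) :
  char_poly (pairmx (fun i a j b => if a == b then M a i j else 0)) =
  \prod_a char_poly (M a).
Proof.
rewrite /char_poly -det_pairmx_diag; congr (\det _); apply: pairmxP => i a j b.
rewrite !mxE !mxvec_pairK eq_mxvec_index /=.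
by case: (a =P b) => [->|_]; rewrite ?eqxx ?andbT ?andbF // mulr0n polyC0 subr0.
Qed.

Lemma char_poly_similar (K : comUnitRingType) m (A B P : 'M[K]_m) :
  P \in unitmx -> A *m P = P *m B -> char_poly A = char_poly B.
Proof.
move=> P_unit AP_PB; pose Pp := map_mx polyC P.
have : char_poly_mx A *m Pp = Pp *m char_poly_mx B.
  by rewrite /char_poly_mx mulmxBl mulmxBr -!map_mxM AP_PB scalar_mxC.
move/(congr1 (fun q => (\det P)^-1%:P * \det q)); rewrite /= !det_mulmx det_map_mx /=.
by rewrite [_ * (\det P)%:P]mulrC !mulrA -polyCM mulVr -?unitmxE // polyC1 !mul1r.
Qed.

Section BlockCirculant.
Variables (K : fieldType) (p n : nat) (w : K).
Hypothesis w_prim : n.-primitive_root w.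
Variable F : 'I_n -> 'M[K]_p.

(* Block (a, b) is L_(b - a) with L := idft w F, the index being read modulo n. *)
Definition block_circulant : 'M[K]_(p * n) :=
  pairmx (fun i a j b => idft w (fun l => F l i j) (b + (n - a))%N).

Let fourier : 'M[K]_(p * n) := kron1mx p (dft_mx n w).

Lemma fourier_unit : fourier \in unitmx.
Proof.
have /mulmx1_unit[] // : fourier *m kron1mx p (dft_inv_mx n w) = 1%:M.
by rewrite mul_kron1mx (dft_mxK w_prim) kron1mx1.
Qed.

Lemma block_circulant_fourier :
  block_circulant *m fourier =
  fourier *m pairmx (fun i a j b => if a == b then F a i j else 0).
Proof.
rewrite /fourier mul_pairmx_kron1mx mul_kron1mx_pairmx.
apply: pairmxP => i a j b; rewrite !pairmxE.
under eq_bigr do rewrite mxE.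
rewrite (sum_idft_shift w_prim) (bigD1 b) //= eqxx big1 ?addr0 => [|c /negbTE->].
  by rewrite mxE mulrC.
by rewrite mulr0.
Qed.

Theorem char_poly_block_circulant :
  char_poly block_circulant = \prod_a char_poly (F a).
Proof.
rewrite -char_poly_pairmx_diag.
exact: char_poly_similar fourier_unit block_circulant_fourier.
Qed.

End BlockCirculant.

Local Open Scope complex_scope.

Theorem mainTheorem11 (R : realType) (p g n : nat) (beta1 beta2 : 'I_n -> R)
    (S : 'I_n -> 'M[R]_p) :
  prime p -> is_generator_mod p g -> (0 < n)%N ->
  let phi : R[i] := cis ((2 * pi) / (p.-1)%:R) in
  let omega : R[i] := cis ((2 * pi) / n%:R) in
  let B : 'I_n -> seq R[i] := fun k => Bset p phi (beta1 k) (beta2 k) in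
  (forall k, 0 <= beta2 k) ->
  (forall k0 : 'I_n, val k0 = 0%N -> beta2 k0 <= beta1 k0) ->
  (forall k, is_gcirc p g (S k)) ->
  (forall k, spectrum_is (S k) (B k)) ->
  (forall k k' : 'I_n, (1 <= k)%N -> val k' = (n - k)%N ->
      perm_eq (B k') (map Num.conj (B k))) ->
  (forall (k : 'I_n) (i j : 'I_p),
      0 <= n%:R^-1 * \sum_(l < n) ((S l i j)%:C * omega ^- (k * l))) ->
  exists A : 'M[R]_(p * n),
    (forall r c, 0 <= A r c) /\ is_gcirc_blocks p n g A /\
    spectrum_is A (flatten [seq B k | k <- enum 'I_n]).
Proof.
move=> _ _ n_gt0 phi omega B _ _ S_gcirc S_spec _ L_ge0.
have omega_prim : n.-primitive_root omega by exact: cis_prim_root.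
pose L (i j : 'I_p) := idft omega (fun l => (S l i j)%:C).
have L_nonneg i j k : 0 <= L i j k.
  by rewrite /L -(idft_mod omega_prim); exact: (L_ge0 (Ordinal (ltn_pmod k n_gt0))).
pose A : 'M[R]_(p * n) :=
  pairmx (fun i (a : 'I_n) j b => complex.Re (L i j (b + (n - a))%N)).
have A_complex : map_mx (fun x => x%:C) A =
                 block_circulant omega (fun l => map_mx (fun x => x%:C) (S l)).
  apply: pairmxP => i a j b; rewrite mxE pairmxE RRe_real ?ger0_real //.
  by rewrite /L /idft; under [in RHS]eq_bigr do rewrite mxE.
exists A; split; [|split].
- move=> x y; case/mxvec_indexP: x => i a; case/mxvec_indexP: y => j b.
  by have := L_nonneg i j (b + (n - a))%N; rewrite pairmxE lecE => /andP[].
- move=> i j i' j' a b i'E j'E; rewrite !pairmxE /L /idft.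
  by under eq_bigr => l _ do rewrite (S_gcirc l i j i' j' i'E j'E).
apply: etrans (congr1 char_poly A_complex) _.
rewrite (char_poly_block_circulant omega_prim).
rewrite big_flatten big_map big_enum /=; apply: eq_bigr => k _; exact: S_spec.
Qed.
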